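(* Let $\mathcal{M}=(E,\mathcal{I})$ be a loopless matroid with $n=|E|$ elements and rank $r\geq 1$ that is uniformly dense. Let $1\leq j\leq n$ and let $(x_1,\dots,x_j)$ be a sequence of $j$ distinct elements of $E$ chosen uniformly at random among all such sequences. Then the probability that $x_j$ is selected by the greedy procedure run on the sequence $(x_1,\dots,x_j)$ is at least $1-(j-1)/r$.
   Context: For a loopless matroid $\mathcal{M}=(E,\mathcal{I})$ with rank function $r(\cdot)$, its density is $\gamma(\mathcal{M})=\max_{\emptyset\neq X\subseteq E}|X|/r(X)$. The matroid is uniformly dense if $|X|/r(X)\leq |E|/r(E)$ for every non-empty $X\subseteq E$. The greedy procedure on a sequence of elements processes them in order and selects an element if and only if it can be added to the previously selected elements while keeping the selected set independent. *)

From mathcomp Require Import all_boot all_order all_algebra.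
Set Implicit Arguments. Unset Strict Implicit. Unset Printing Implicit Defensive.
Import GRing.Theory Num.Theory.

(* A matroid on the finite ground set E (the whole finType), given by its
   independent sets. *)
Record matroid (E : finType) := Matroid {
  indep : pred {set E};
  indep0 : indep set0;
  indep_sub : forall A B : {set E}, B \subset A -> indep A -> indep B;
  indep_aug : forall A B : {set E}, indep A -> indep B -> #|A| < #|B| ->
     exists2 x, x \in B :\: A & indep (x |: A)
}.

Section M.
Variables (E : finType) (M : matroid E).

Definition mrank (X : {set E}) : nat :=
  \max_(A : {set E} | (A \subset X) && indep M A) #|A|.

Definition loopless : Prop := forall x : E, indep M [set x].

Definition uniformly_dense : Prop :=
  forall X : {set E}, X != set0 ->
    ((#|X|%:R / (mrank X)%:R) <= (#|E|%:R / (mrank setT)%:R) :> rat)%R.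

Definition greedy (s : seq E) : {set E} :=
  foldl (fun S x => if indep M (x |: S) then x |: S else S) set0 s.

End M.

From mathcomp Require Import all_boot all_order all_algebra.
From mathcomp Require Import zify ring.
Import GRing.Theory Num.Theory.

Set Implicit Arguments.
Unset Strict Implicit.
Unset Printing Implicit Defensive.

(* Condition on the first j - 1 = k elements, forming a duplicate-free sequence
   s. The greedy set G of s is independent, of size m <= min(k, r), and s lies
   in the span C of G, a flat of rank at most m. A fresh element x_j is rejected
   exactly when it lies in C \ s; uniform density bounds |C| <= n m / r, so at
   most n m / r - k of the n - k fresh elements are rejected, and
   r (n m / r - k) <= k (n - k) because m <= min(k, r) and k <= n. Averaging
   over s gives the bound. *)

Section Greedy.
Variables (E : finType) (M : matroid E).

Definition greedy_step (S : {set E}) (x : E) : {set E} :=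
  if indep M (x |: S) then x |: S else S.

Lemma greedyE (s : seq E) : greedy M s = foldl greedy_step set0 s.
Proof. by []. Qed.

Lemma subset_foldl_greedy_step (S : {set E}) (s : seq E) :
  S \subset foldl greedy_step S s.
Proof.
elim: s S => [|x s IHs] S /=; first exact: subxx.
by apply: subset_trans (IHs _); rewrite /greedy_step; case: ifP => // _; apply: subsetUr.
Qed.

Lemma foldl_greedy_step_subset (S : {set E}) (s : seq E) :
  foldl greedy_step S s \subset S :|: [set x in s].
Proof.
elim: s S => [|x s IHs] S /=; first exact: subsetUl.
apply: subset_trans (IHs _) _; apply/subsetP => y; rewrite /greedy_step !inE.
case: ifP => _; rewrite ?inE; last by case/orP => ->; rewrite ?orbT.
by case/orP => [/orP[]|] ->; rewrite ?orbT.
Qed.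

Lemma indep_foldl_greedy_step (S : {set E}) (s : seq E) :
  indep M S -> indep M (foldl greedy_step S s).
Proof. by elim: s S => [|x s IHs] S //= iS; apply: IHs; rewrite /greedy_step; case: ifP. Qed.

Lemma foldl_greedy_step_spans (S : {set E}) (s : seq E) y : y \in s ->
  (y \in foldl greedy_step S s) || ~~ indep M (y |: foldl greedy_step S s).
Proof.
elim: s S => [|x s IHs] S //=; rewrite inE => /orP[/eqP-> | ys]; last exact: IHs.
rewrite /greedy_step; case: ifP => iyS.
  by rewrite (subsetP (subset_foldl_greedy_step _ _)) ?setU11.
apply/orP; right; apply: contraFN iyS => iyF.
by apply: indep_sub iyF; apply/setUS/subset_foldl_greedy_step.
Qed.

Lemma greedy_subset (s : seq E) : greedy M s \subset [set x in s].
Proof. by rewrite greedyE -(set0U [set x in s]); apply: foldl_greedy_step_subset. Qed.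

Lemma greedy_indep (s : seq E) : indep M (greedy M s).
Proof. exact/indep_foldl_greedy_step/indep0. Qed.

Lemma greedy_rcons (s : seq E) x : x \notin s ->
  (x \in greedy M (rcons s x)) = indep M (x |: greedy M s).
Proof.
move=> xNs; rewrite !greedyE foldl_rcons -greedyE /greedy_step.
case: ifP => _; first by rewrite setU11.
by apply: contraNF xNs => /(subsetP (greedy_subset s)); rewrite inE.
Qed.

Definition mspan (G : {set E}) : {set E} :=
  [set y | (y \in G) || ~~ indep M (y |: G)].

Lemma greedy_mspan (s : seq E) : [set x in s] \subset mspan (greedy M s).
Proof. by apply/subsetP => y; rewrite !inE; apply: foldl_greedy_step_spans. Qed.

Lemma indep_leq_mrank (X A : {set E}) :
  A \subset X -> indep M A -> #|A| <= mrank M X.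
Proof.
move=> sAX iA.
by apply: (@leq_bigmax_cond _ (fun B : {set E} => (B \subset X) && indep M B)); rewrite sAX.
Qed.

Lemma mrank_mspan (G : {set E}) : indep M G -> mrank M (mspan G) <= #|G|.
Proof.
move=> iG; apply/bigmax_leqP => A /andP[sAC iA]; rewrite leqNgt; apply/negP => ltGA.
have [x /setDP[xA xNG] ixG] := indep_aug iG iA ltGA.
by move: (subsetP sAC x xA); rewrite inE (negbTE xNG) ixG.
Qed.

Lemma mrank_gt0 (X : {set E}) : loopless M -> X != set0 -> 0 < mrank M X.
Proof.
move=> ll /set0Pn[y yX].
by rewrite -(cards1 y); apply: indep_leq_mrank; rewrite ?sub1set.
Qed.

Lemma uniformly_dense_card (X : {set E}) :
  loopless M -> uniformly_dense M -> X != set0 ->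
  #|X| * mrank M setT <= #|E| * mrank M X.
Proof.
move=> ll ud X0; have T0 : [set: E] != set0.
  by case/set0Pn: X0 => y _; apply/set0Pn; exists y; rewrite inE.
have := ud X X0; rewrite ler_pdivrMr ?ltr0n ?mrank_gt0 // mulrAC.
by rewrite ler_pdivlMr ?ltr0n ?mrank_gt0 // -!natrM ler_nat.
Qed.

Lemma greedy_reject_card (s : seq E) :
  loopless M -> uniformly_dense M -> uniq s ->
  mrank M setT * #|[pred x | (x \notin s) && ~~ indep M (x |: greedy M s)]|
    <= size s * (#|E| - size s).
Proof.
move=> ll ud us; set G := greedy M s; set C := mspan G.
have card_s : #|[set x in s]| = size s by rewrite cardsE; apply/card_uniqP.
have sC := greedy_mspan s; have iG : indep M G := greedy_indep s.
have Gk : #|G| <= size s by rewrite -card_s subset_leq_card ?greedy_subset.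
have Gr : #|G| <= mrank M setT by rewrite indep_leq_mrank ?subsetT.
have rejC : #|[pred x | (x \notin s) && ~~ indep M (x |: G)]| <= #|C| - size s.
  rewrite -card_s -(cardsDS sC); apply: subset_leq_card; apply/subsetP => x.
  by rewrite !inE => /andP[-> ->]; rewrite orbT.
have [C0 | C_neq0] := eqVneq C set0.
  by move: rejC; rewrite C0 cards0 leqn0 => /eqP ->; rewrite muln0.
have dense : #|C| * mrank M setT <= #|E| * #|G|.
  by rewrite (leq_trans (uniformly_dense_card ll ud C_neq0)) ?leq_mul2l ?mrank_mspan ?orbT.
have kE : size s <= #|E| by rewrite -card_s max_card.
have CE : #|C| <= #|E| := max_card _.
nia.
Qed.

Lemma greedy_accept_card (s : seq E) :
  loopless M -> uniformly_dense M -> uniq s ->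
  mrank M setT * #|[pred x | x \notin s]|
    <= mrank M setT * #|[pred x | (x \notin s) && indep M (x |: greedy M s)]|
       + size s * #|[pred x | x \notin s]|.
Proof.
move=> ll ud us; have fresh : #|[pred x | x \notin s]| = #|E| - size s.
  by rewrite -(cardC (mem s)) (card_uniqP us) addKn; apply: eq_card => x; rewrite !inE.
rewrite -{1}(cardID [pred x | indep M (x |: greedy M s)] [pred x | x \notin s]).
rewrite mulnDr leq_add2l fresh (leq_trans _ (greedy_reject_card ll ud us)) //.
by rewrite leq_mul2l; apply/orP; right; apply/subset_leq_card/subsetP => x; rewrite !inE andbC.
Qed.

End Greedy.

Section UniqTuples.
Variables (T : finType) (k : nat).

Lemma rcons_tuple_bij : bijective (fun p : k.-tuple T * T => rcons_tuple p.1 p.2).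
Proof.
pose split_last (t : (k.+1).-tuple T) :=
  ([tuple of belast (thead t) (behead t)], last (thead t) (behead t)).
have headE (t : (k.+1).-tuple T) : thead t :: behead t = t.
  by case/tupleP: t => x t; rewrite theadE.
exists split_last => [[s x] | t]; last by apply: val_inj; rewrite /= -lastI headE.
have := lastI (thead (rcons_tuple s x)) (behead (rcons_tuple s x)).
rewrite headE /= => /rcons_inj[e_s e_x].
by rewrite /split_last; congr pair; [apply: val_inj; rewrite /= -e_s | rewrite -e_x].
Qed.

Lemma card_uniq_tuple_rcons (P : pred ((k.+1).-tuple T)) :
  #|[pred t : (k.+1).-tuple T | uniq t && P t]| =
  \sum_(s : k.-tuple T | uniq s) #|[pred x | (x \notin s) && P (rcons_tuple s x)]|.
Proof.
rewrite -sum1_card (reindex _ (onW_bij _ rcons_tuple_bij)).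
under [RHS]eq_bigr => s _ do rewrite -sum1_card.
rewrite pair_big_dep; apply: eq_bigl => -[s x] /=.
by rewrite !inE /= rcons_uniq andbA (andbC (x \notin s)).
Qed.

Lemma card_uniq_tuple :
  #|[pred t : (k.+1).-tuple T | uniq t]| =
  \sum_(s : k.-tuple T | uniq s) #|[pred x | x \notin s]|.
Proof.
rewrite -(@eq_card _ [pred t : (k.+1).-tuple T | uniq t && true]) => [|t].
  by rewrite card_uniq_tuple_rcons; apply: eq_bigr => s _; apply: eq_card => x; rewrite !inE andbT.
by rewrite !inE andbT.
Qed.

Lemma tnth_rcons_tuple_max (s : k.-tuple T) x : tnth (rcons_tuple s x) ord_max = x.
Proof. by rewrite (tnth_nth x) /= nth_rcons size_tuple ltnn eqxx. Qed.

End UniqTuples.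

Lemma card_uniq_tuple_gt0 (T : finType) (n : nat) :
  n <= #|T| -> 0 < #|[pred t : n.-tuple T | uniq t]|.
Proof.
move=> nT; have size_take : size (take n (enum T)) == n by rewrite size_takel -?cardE.
by apply/card_gt0P; exists (Tuple size_take); rewrite inE take_uniq ?enum_uniq.
Qed.

Lemma one_sub_ratio_le (R : realFieldType) (r k a N : nat) :
  0 < r -> 0 < N -> r * N <= r * a + k * N ->
  (1 - k%:R / r%:R <= a%:R / N%:R :> R)%R.
Proof.
move=> r_gt0 N_gt0 le_rN.
have r_neq0 : (r%:R != 0 :> R)%R by rewrite pnatr_eq0 -lt0n.
rewrite ler_pdivlMr ?ltr0n // -(ler_pM2l (_ : (0 < r%:R :> R)%R)) ?ltr0n //.
have -> : (r%:R * ((1 - k%:R / r%:R) * N%:R) = r%:R * N%:R - k%:R * N%:R :> R)%R.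
  by field.
by rewrite lerBlDr -!natrM -natrD ler_nat.
Qed.

Theorem lemma1 (E : finType) (M : matroid E) (k : nat) :
  loopless M -> (1 <= mrank M setT)%N -> uniformly_dense M ->
  (k.+1 <= #|E|)%N ->
  ((1 - k%:R / (mrank M setT)%:R) <=
    #|[pred t : (k.+1).-tuple E | uniq t && (tnth t ord_max \in greedy M t)]|%:R
    / #|[pred t : (k.+1).-tuple E | uniq t]|%:R :> rat)%R.
Proof.
move=> ll r_gt0 ud kE.
have := card_uniq_tuple_gt0 kE; rewrite card_uniq_tuple card_uniq_tuple_rcons => fresh_gt0.
have accepted (s : k.-tuple E) :
    #|[pred x | (x \notin s) && (tnth (rcons_tuple s x) ord_max \in greedy M (rcons_tuple s x))]|
    = #|[pred x | (x \notin s) && indep M (x |: greedy M s)]|.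
  apply: eq_card => x; rewrite !inE tnth_rcons_tuple_max.
  by case: (boolP (x \in s)) => //= xNs; rewrite greedy_rcons.
rewrite (eq_bigr _ (fun s _ => accepted s)); apply: one_sub_ratio_le => //.
rewrite !big_distrr -big_split /=; apply: leq_sum => s us.
by have := greedy_accept_card ll ud us; rewrite size_tuple.
Qed.
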